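(* Let $p:\mathbb{N}\to[0,1]$ satisfy density ($p(n)\to\tilde p>0$), root growth ($p(n)=Kn^{-\beta}$, $K>0$, $0<\beta<1$) or logarithmic growth ($p(n)=K\log(n)/n$, $K>0$). Then for every $k\in\mathbb{N}$ and every $\epsilon,\delta,\theta>0$ there is $N\in\mathbb{N}$ such that for all $n\ge N$, with probability at least $1-\theta$ over $G\sim\mathrm{ER}(n,p(n))$, the proportion of nodes $v$ with $\|\mathrm{rw}_k(v)\|<\epsilon$ is at least $1-\delta$.
   Context: $\mathrm{ER}(n,p)$ is the Erdős–Rényi random graph. For a node $v$, $\mathrm{rw}_k(v)\in\mathbb{R}^k$ is the vector whose $j$-th entry ($1\le j\le k$) is the probability that a simple random walk of $j$ steps started at $v$ is at $v$ after $j$ steps ($\mathrm{rw}_k(v)=0$ if $v$ is isolated). *)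

From HB Require Import structures.
From mathcomp Require Import all_boot all_order all_algebra.
From mathcomp Require Import all_classical all_reals all_analysis.
Set Implicit Arguments. Unset Strict Implicit. Unset Printing Implicit Defensive.
Import Order.TTheory GRing.Theory Num.Theory.
Import numFieldNormedType.Exports.
Local Open Scope classical_set_scope.
Local Open Scope ring_scope.

Definition graph (n : nat) := {set ('I_n * 'I_n)}.

Definition simple_graph (n : nat) (E : graph n) : bool :=
  [forall u : 'I_n, forall v : 'I_n, ((u, v) \in E) == ((v, u) \in E)]
  && [forall u : 'I_n, (u, u) \notin E].

Definition adj (n : nat) (E : graph n) (u v : 'I_n) : bool := (u, v) \in E.

Definition deg (n : nat) (E : graph n) (u : 'I_n) : nat := #|[set v | adj E u v]|.

Definition isolated (n : nat) (E : graph n) (u : 'I_n) : bool := deg E u == 0%N.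

(* Erdos-Renyi probability weight of a simple graph E in ER(n,q):
   each unordered pair {u,v} (u < v) is an edge independently with prob. q. *)
Definition er_weight (R : realType) (n : nat) (q : R) (E : graph n) : R :=
  \prod_(u : 'I_n) \prod_(v : 'I_n | (u < v)%N) (if adj E u v then q else 1 - q).

Definition er_prob (R : realType) (n : nat) (q : R) (P : pred (graph n)) : R :=
  \sum_(E : graph n | simple_graph E && P E) er_weight q E.

Definition trans (R : realType) (n : nat) (E : graph n) (u w : 'I_n) : R :=
  if adj E u w then (deg E u)%:R^-1 else 0.

Fixpoint walkprob (R : realType) (n : nat) (E : graph n) (j : nat) (v w : 'I_n) : R :=
  match j with
  | 0%N => if v == w then 1 else 0
  | j'.+1 => \sum_(u : 'I_n) walkprob R E j' v u * trans R E u w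
  end.

(* rw_k(v) in R^k, as a function of the index j in {1,...,k} (stored at 'I_k index j-1);
   rw_k(v) = 0 if v is isolated. *)
Definition rw (R : realType) (n k : nat) (E : graph n) (v : 'I_n) (i : 'I_k) : R :=
  if isolated E v then 0 else walkprob R E i.+1 v v.

Definition rw_norm (R : realType) (n k : nat) (E : graph n) (v : 'I_n) : R :=
  Num.sqrt (\sum_(i : 'I_k) (@rw R n k E v i) ^+ 2).

Definition small_rw_proportion (R : realType) (n k : nat) (eps : R) (E : graph n) : R :=
  #|[set v : 'I_n | @rw_norm R n k E v < eps]|%:R / n%:R.

Definition density_regime (R : realType) (p : nat -> R) : Prop :=
  exists pt : R, 0 < pt /\ p @ \oo --> pt.

Definition root_regime (R : realType) (p : nat -> R) : Prop :=
  exists K beta : R, 0 < K /\ 0 < beta /\ beta < 1 /\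
    \forall n \near \oo, p n = K * powR (n%:R) (- beta).

Definition log_regime (R : realType) (p : nat -> R) : Prop :=
  exists K : R, 0 < K /\ \forall n \near \oo, p n = K * ln (n%:R) / n%:R.

(* A vertex [v] all of whose neighbours have degree at least [D] returns to
   itself after [j >= 1] steps with probability at most [1 / D], since the last
   step leaves one of these neighbours; so [||rw_k(v)||^2 <= k / D^2 < eps^2]
   once [D] is large. Every other vertex has a neighbour [u] of degree below
   [D], hence the number of such vertices is at most [D 2^D sum_u 2^-deg u].
   As [deg u] is Binomial(n - 1, p), the mean of [2^-deg u] is
   [(1 - p/2)^(n-1) <= 1 / (1 + (n - 1) p / 2)], which tends to [0] because
   [n p(n) -> oo] in each of the three regimes; Markov's inequality concludes. *)

From HB Require Import structures.
From mathcomp Require Import all_boot all_order all_algebra.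
From mathcomp Require Import all_classical all_reals all_analysis.
From mathcomp Require Import ring lra.
Import Order.TTheory GRing.Theory Num.Theory.
Local Open Scope ring_scope.
Set Implicit Arguments. Unset Strict Implicit.

Section SimpleGraphSums.
Variable n : nat.
Implicit Types (E : graph n) (x : 'I_n * 'I_n).

Definition swap_pair x : 'I_n * 'I_n := (x.2, x.1).

Definition upper x : bool := (x.1 < x.2)%N.

Lemma swap_pairK : involutive swap_pair.
Proof. by case. Qed.

Lemma upper_swap_pair x : upper x -> upper (swap_pair x) = false.
Proof. by case: x => a b; rewrite /upper /= => /ltnW; rewrite leqNgt => /negbTE. Qed.

Lemma prod_pairs_split (R : comPzSemiRingType) (g : 'I_n * 'I_n -> R) :
  \prod_x g x =
  \prod_(x | upper x) (g x * g (swap_pair x)) * \prod_(x | x.1 == x.2) g x.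
Proof.
rewrite (bigID upper) /= (bigID (upper \o swap_pair) (predC upper)) /=.
rewrite mulrA big_split /=; congr (_ * _ * _).
  rewrite (reindex_inj (can_inj swap_pairK)) /=; apply: eq_bigl => -[a b] /=.
  by rewrite /upper /=; case: ltngtP.
by apply: eq_bigl => -[a b] /=; rewrite /upper -val_eqE /=; case: ltngtP.
Qed.

(* A simple graph is determined by its edges [(u, v)] with [u < v]. *)
Definition upper_part E : {ffun 'I_n * 'I_n -> bool} :=
  [ffun x => upper x && (x \in E)].

Definition symmetrize (b : {ffun 'I_n * 'I_n -> bool}) : graph n :=
  [set x | (upper x && b x) || (upper (swap_pair x) && b (swap_pair x))].

Lemma upper_partK (b : {ffun 'I_n * 'I_n -> bool}) :
  [forall x, ~~ upper x ==> ~~ b x] -> upper_part (symmetrize b) = b.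
Proof.
move=> /forallP b_upper; apply/ffunP => x; rewrite !ffunE inE.
case ux: (upper x) => /=; first by rewrite upper_swap_pair //= orbF.
by have := b_upper x; rewrite ux => /negbTE ->.
Qed.

Lemma simple_graph_swap E : simple_graph E -> forall x, (swap_pair x \in E) = (x \in E).
Proof. by case/andP => /forallP sym _ [a b]; move/forallP: (sym a) => /(_ b) /eqP ->. Qed.

Lemma simple_graph_irrefl E : simple_graph E -> forall a, (a, a) \notin E.
Proof. by case/andP => _ /forallP. Qed.

Lemma symmetrize_upper_part E : (symmetrize (upper_part E) == E) = simple_graph E.
Proof.
apply/eqP/idP => [/setP defE | simE]; last first.
  apply/setP => -[a b]; rewrite inE !ffunE (simple_graph_swap simE).
  rewrite /upper /=; case: (ltngtP a b) => //= [|/val_inj <-]; first by rewrite orbF.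
  by rewrite (negbTE (simple_graph_irrefl simE a)).
have memE x : (x \in E) =
    (upper x && (x \in E)) || (upper (swap_pair x) && (swap_pair x \in E)).
  by rewrite -[LHS]defE inE !ffunE !andbA !andbb.
apply/andP; split.
  apply/forallP => u; apply/forallP => v; apply/eqP.
  rewrite (memE (u, v)) (memE (v, u)) /upper /=.
  by case: ltngtP; rewrite /= ?orbF // => /val_inj ->.
by apply/forallP => u; rewrite (memE (u, u)) /upper ltnn.
Qed.

Lemma sum_simple_graph_prod (R : comPzSemiRingType) (f : 'I_n * 'I_n -> bool -> R) :
  \sum_(E : graph n | simple_graph E) \prod_(x | upper x) f x (x \in E) =
  \prod_(x | upper x) (f x true + f x false).
Proof.
pose g x c : R := if upper x then f x c else if c then 0 else 1.
transitivity (\prod_x \sum_(c : bool) g x c); last first.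
  rewrite (bigID upper) /= [X in _ * X]big1 ?mulr1; last first.
    by move=> x /negbTE ux; rewrite big_bool /g ux /= add0r.
  by apply: eq_bigr => x ux; rewrite big_bool /g ux.
rewrite bigA_distr_bigA /=.
rewrite (bigID (fun b : {ffun _ -> bool} => [forall x, ~~ upper x ==> ~~ b x])) /=.
rewrite [X in _ = _ + X]big1 ?addr0; last first.
  move=> b /forallPn [x]; rewrite negb_imply negbK => /andP [/negbTE ux bx].
  by rewrite (bigD1 x) //= /g ux bx mul0r.
rewrite (reindex_onto upper_part symmetrize upper_partK) /=.
apply: eq_big => [E | E _].
  rewrite symmetrize_upper_part [X in _ = X && _](_ : _ = true) //.
  by apply/forallP => x; rewrite ffunE; apply/implyP => /negbTE ->.
rewrite [RHS](bigID upper) /= [X in _ = _ * X]big1 ?mulr1; last first.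
  by move=> x /negbTE ux; rewrite /g ffunE ux.
by apply: eq_bigr => x ux; rewrite /g ffunE ux.
Qed.

(* The neighbourhood counted by [deg] is a classical set, whose membership
   reduces to [asbool]. *)
Lemma degE E u : deg E u = #|[pred v | adj E u v]|.
Proof. by apply: eq_card => v; rewrite /in_mem /= /in_set asboolb. Qed.

Lemma expr_deg_prod (R : comPzSemiRingType) (t : R) E u :
  t ^+ deg E u = \prod_x (if (x \in E) && (x.1 == u) then t else 1).
Proof.
transitivity (\prod_i \prod_j (if ((i, j) \in E) && (i == u) then t else 1));
  last by rewrite pair_bigA; apply: eq_bigr => -[].
rewrite (bigD1 u) //= [X in _ * X]big1 ?mulr1; last first.
  by move=> i /negbTE iu; apply: big1 => j _; rewrite iu andbF.
rewrite (eq_bigr (fun v => if v \in [pred v | adj E u v] then t else 1)); last first.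
  by move=> v _; rewrite eqxx andbT.
by rewrite -big_mkcond prodr_const degE.
Qed.

Lemma prod_row_offdiag (R : comPzSemiRingType) (c : R) (u : 'I_n) :
  \prod_x (if (x.1 == u) && (x.2 != u) then c else 1) = c ^+ n.-1.
Proof.
transitivity (\prod_i \prod_j (if (i == u) && (j != u) then c else 1)).
  by rewrite pair_bigA; apply: eq_bigr => -[].
rewrite (bigD1 u) //= [X in _ * X]big1 ?mulr1; last first.
  by move=> i /negbTE iu; apply: big1 => j _; rewrite iu.
under eq_bigr do rewrite eqxx.
by rewrite -big_mkcond prodr_const cardC1 card_ord.
Qed.

End SimpleGraphSums.

Section ErdosRenyi.
Variables (R : realType) (n : nat) (q : R).
Implicit Types (E : graph n) (x : 'I_n * 'I_n).

Lemma er_weightE E :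
  er_weight q E = \prod_(x | upper x) (if x \in E then q else 1 - q).
Proof. by rewrite /er_weight pair_big_dep /=; apply: eq_big => -[]. Qed.

Lemma er_weight_ge0 E : 0 <= q <= 1 -> 0 <= er_weight q E.
Proof.
case/andP => q0 q1; rewrite er_weightE; apply: prodr_ge0 => x _.
by case: ifP; rewrite ?subr_ge0.
Qed.

Lemma er_weight_sum : \sum_(E : graph n | simple_graph E) er_weight q E = 1.
Proof.
under eq_bigr do rewrite er_weightE.
rewrite (sum_simple_graph_prod (fun x (b : bool) => if b then q else 1 - q)) /=.
by apply: big1 => x _; rewrite addrC subrK.
Qed.

Lemma er_deg_pgf (t : R) u :
  \sum_(E : graph n | simple_graph E) er_weight q E * t ^+ deg E u = (1 - q + q * t) ^+ n.-1.
Proof.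
pose phi x (b : bool) : R := if b && (x.1 == u) then t else 1.
pose f x (b : bool) := (if b then q else 1 - q) * (phi x b * phi (swap_pair x) b).
transitivity (\sum_(E : graph n | simple_graph E) \prod_(x | upper x) f x (x \in E)).
  apply: eq_bigr => E simE; rewrite er_weightE expr_deg_prod prod_pairs_split.
  rewrite [X in _ * (_ * X)]big1 ?mulr1 -?big_split //=.
    by apply: eq_bigr => x _; rewrite simple_graph_swap.
  by move=> [a b] /= /eqP <-; rewrite (negbTE (simple_graph_irrefl simE a)).
rewrite sum_simple_graph_prod -(prod_row_offdiag _ u) prod_pairs_split.
rewrite [X in _ = _ * X]big1 ?mulr1; last by move=> [a b] /= /eqP ->; rewrite andbN.
apply: eq_bigr => -[a b]; rewrite /upper /f /phi /= => ab.
case: (eqVneq a u) => [au|_]; case: (eqVneq b u) => [bu|_] /=; try ring.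
by move: ab; rewrite au bu ltnn.
Qed.

End ErdosRenyi.

Section RandomWalk.
Variables (R : realType) (n : nat) (E : graph n).
Implicit Types (u v w : 'I_n) (j : nat).

Lemma trans_ge0 u w : 0 <= trans R E u w.
Proof. by rewrite /trans; case: ifP; rewrite ?invr_ge0. Qed.

Lemma sum_trans_le1 u : \sum_w trans R E u w <= 1.
Proof.
rewrite /trans -big_mkcond sumr_const -degE -(mulr_natr _^-1).
have [->|deg_gt0] := posnP (deg E u); first by rewrite mulr0.
by rewrite mulVf // pnatr_eq0 -lt0n.
Qed.

Lemma walkprob_ge0 j v w : 0 <= walkprob R E j v w.
Proof.
elim: j w => [|j IH] w /=; first by case: ifP.
by apply: sumr_ge0 => u _; rewrite mulr_ge0 ?trans_ge0.
Qed.

Lemma sum_walkprob_le1 j v : \sum_w walkprob R E j v w <= 1.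
Proof.
elim: j => [|j IH] /=; first by rewrite -big_mkcond (big_pred1 v) // => w; rewrite eq_sym.
rewrite exchange_big /=; apply: le_trans IH; apply: ler_sum => u _.
by rewrite -mulr_sumr ler_piMr ?walkprob_ge0 ?sum_trans_le1.
Qed.

Lemma walkprob_return_le j v (D : nat) : (0 < D)%N ->
  (forall u, adj E u v -> (D <= deg E u)%N) -> walkprob R E j.+1 v v <= D%:R^-1.
Proof.
move=> D_gt0 nbr_deg /=.
apply: (@le_trans _ _ (\sum_u walkprob R E j v u * D%:R^-1)).
  apply: ler_sum => u _; rewrite ler_wpM2l ?walkprob_ge0 // /trans.
  case: ifP => [/nbr_deg Du|_]; last by rewrite invr_ge0.
  by rewrite lef_pV2 ?posrE ?ltr0n ?ler_nat // (leq_trans D_gt0).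
by rewrite -mulr_suml ler_piMl ?invr_ge0 ?sum_walkprob_le1.
Qed.

Lemma rw_norm_lt k v (D : nat) (eps : R) :
  (0 < D)%N -> 0 < eps -> k%:R < eps ^+ 2 * D%:R ^+ 2 ->
  (forall u, adj E u v -> (D <= deg E u)%N) -> rw_norm R k E v < eps.
Proof.
move=> D_gt0 eps_gt0 k_lt nbr_deg.
have D_pos : (0 : R) < D%:R by rewrite ltr0n.
rewrite /rw_norm -(ger0_norm (ltW eps_gt0)) -sqrtr_sqr ltr_sqrt ?exprn_gt0 //.
apply: (@le_lt_trans _ _ (\sum_(i < k) D%:R^-1 ^+ 2)).
  apply: ler_sum => i _; rewrite /rw; case: ifP => _; first by rewrite expr0n sqr_ge0.
  by rewrite ler_sqr ?nnegrE ?invr_ge0 ?walkprob_ge0 ?walkprob_return_le // ltW.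
by rewrite sumr_const card_ord -(mulr_natl _ k) exprVn ltr_pdivrMr ?exprn_gt0.
Qed.

End RandomWalk.

Section LowDegreeNeighbours.
Variables (n : nat) (E : graph n) (D : nat).

Definition has_low_deg_nbr (v : 'I_n) : bool := [exists u, adj E u v && (deg E u < D)%N].

Lemma card_has_low_deg_nbr :
  (#|has_low_deg_nbr| <= \sum_(u | (deg E u < D)%N) deg E u)%N.
Proof.
rewrite -sum1_card (@leq_trans (\sum_v \sum_(u | (deg E u < D)%N) adj E u v)) //.
  rewrite big_mkcond /=; apply: leq_sum => v _.
  case: ifP => // /existsP [u /andP [uv lt_uD]].
  by rewrite (bigD1 u) //= uv.
rewrite exchange_big; apply: leq_sum => u _.
rewrite degE -sum1_card [X in (_ <= X)%N]big_mkcond.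
by apply: leq_sum => v _; rewrite inE; case: adj.
Qed.

(* Bounding [deg u] by [D 2^D 2^-deg u] turns the count into a sum whose mean
   under ER(n, q) is computable. *)
Lemma card_has_low_deg_nbr_le (R : realType) :
  #|has_low_deg_nbr|%:R <= D%:R * 2 ^+ D * \sum_u 2^-1 ^+ deg E u :> R.
Proof.
have card_le := card_has_low_deg_nbr; rewrite -(ler_nat R) natr_sum in card_le.
rewrite (le_trans card_le) // mulr_sumr.
rewrite [X in _ <= X](bigID (fun u => (deg E u < D)%N)) /= -[X in X <= _]addr0.
rewrite lerD //; last by apply: sumr_ge0 => u _; rewrite !mulr_ge0 ?exprn_ge0.
apply: ler_sum => u lt_uD; rewrite -mulrA -{1}[(deg E u)%:R]mulr1.
rewrite ler_pM ?ler_nat ?(ltnW lt_uD) // -(subnK (ltnW lt_uD)) exprD -mulrA.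
by rewrite -exprMn mulfV ?pnatr_eq0 // expr1n mulr1 exprn_ege1 ?ler1n.
Qed.

End LowDegreeNeighbours.

Section SmallReturnProbabilities.
Variables (R : realType) (n : nat).

Lemma er_prob_markov (q c : R) (P : pred (graph n)) (X : graph n -> R) :
  0 <= q <= 1 -> 0 <= c -> (forall E, 0 <= X E) ->
  (forall E, simple_graph E -> ~~ P E -> 1 <= c * X E) ->
  1 - c * \sum_(E : graph n | simple_graph E) er_weight q E * X E <= er_prob q P.
Proof.
move=> q01 c_ge0 X_ge0 notP_X.
have w_ge0 (E : graph n) : 0 <= er_weight q E by exact: er_weight_ge0.
rewrite lerBlDr -(@er_weight_sum R n q) (bigID P) /= lerD2l /er_prob mulr_sumr.
rewrite [X in _ <= X](bigID P) /= -[X in X <= _]add0r lerD ?sumr_ge0 //.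
  by move=> E _; rewrite mulrCA mulr_ge0 ?mulr_ge0.
apply: ler_sum => E /andP [simE notP].
by rewrite mulrCA ler_peMr ?notP_X.
Qed.

Lemma small_rw_proportionE k (eps : R) (E : graph n) :
  small_rw_proportion k eps E = #|[pred v | rw_norm R k E v < eps]|%:R / n%:R.
Proof.
by congr (_%:R / _); apply: eq_card => v; rewrite /in_mem /= /in_set asboolb.
Qed.

Lemma card_small_rw_low_deg_nbr k (eps : R) (E : graph n) (D : nat) :
  (0 < D)%N -> 0 < eps -> k%:R < eps ^+ 2 * D%:R ^+ 2 ->
  (n <= #|[pred v | (rw_norm R k E v < eps)%R]| + #|has_low_deg_nbr E D|)%N.
Proof.
move=> D_gt0 eps_gt0 k_lt; rewrite -{1}[n]card_ord -(cardC (has_low_deg_nbr E D)).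
rewrite addnC leq_add2r subset_leq_card //; apply/fintype.subsetP => v.
rewrite !inE => /existsPn no_low; apply: (rw_norm_lt (D := D)) => // u uv.
by have := no_low u; rewrite uv /= -leqNgt.
Qed.

Lemma er_prob_small_rw_ge (q eps delta : R) k (D : nat) :
  0 <= q <= 1 -> (0 < n)%N -> (0 < D)%N -> 0 < eps -> 0 < delta ->
  k%:R < eps ^+ 2 * D%:R ^+ 2 ->
  1 - D%:R * 2 ^+ D / delta * (1 - q / 2) ^+ n.-1 <=
  er_prob q (fun E : graph n => 1 - delta <= small_rw_proportion k eps E).
Proof.
move=> q01 n_gt0 D_gt0 eps_gt0 delta_gt0 k_lt.
have n_pos : (0 : R) < n%:R by rewrite ltr0n.
pose c := D%:R * 2 ^+ D / (delta * n%:R).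
have -> : D%:R * 2 ^+ D / delta * (1 - q / 2) ^+ n.-1 =
    c * \sum_(E : graph n | simple_graph E) er_weight q E * \sum_u 2^-1 ^+ deg E u.
  under eq_bigr do rewrite mulr_sumr.
  rewrite exchange_big /=.
  under eq_bigr do rewrite er_deg_pgf.
  rewrite sumr_const card_ord -(mulr_natr (_ ^+ _)) (_ : 1 - q + q / 2 = 1 - q / 2).
    by rewrite /c; field; rewrite !lt0r_neq0.
  by field.
apply: er_prob_markov => // [|E|E simE].
- by rewrite /c !mulr_ge0 ?exprn_ge0 ?invr_ge0 // ?mulr_ge0 ?ltW.
- by rewrite sumr_ge0 // => u _; rewrite exprn_ge0.
rewrite -ltNge small_rw_proportionE ltr_pdivrMr // => small_lt.
have card_le := card_has_low_deg_nbr_le E D R.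
have := @card_small_rw_low_deg_nbr k eps E D D_gt0 eps_gt0 k_lt.
rewrite -(ler_nat R) natrD.
rewrite /c mulrAC ler_pdivlMr ?mulr_gt0 // mul1r; lra.
Qed.

End SmallReturnProbabilities.

Lemma expr1B_mul1D_le1 (R : realType) (a : R) (m : nat) :
  0 <= a <= 1 -> (1 - a) ^+ m * (1 + m%:R * a) <= 1.
Proof.
case/andP => a_ge0 a_le1.
rewrite -[X in _ <= X](expR0 R) -(subrr (m%:R * a)) expRD mulrC.
rewrite ler_pM ?exprn_ge0 ?subr_ge0 ?addr_ge0 ?mulr_ge0 ?expR_ge1Dx //.
rewrite -mulrN expRM_natl lerXn2r ?nnegrE ?subr_ge0 ?expR_ge0 //.
exact: expR_ge1Dx.
Qed.

Section Growth.
Variables (R : realType) (p : nat -> R).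
Local Open Scope classical_set_scope.

Lemma density_regime_growth : density_regime p ->
  forall M : R, \forall n \near \oo, M <= n%:R * p n.
Proof.
move=> [pt [pt_gt0 p_pt]] M; near=> n.
have p_ge : pt / 2 < p n by near: n; apply: (cvgr_gt _ p_pt); lra.
have n_ge : 2 * `|M| / pt <= n%:R by near: n; exact: nbhs_infty_ger.
rewrite (le_trans (ler_norm M)) // (le_trans _ (ler_wpM2l (ler0n _ _) (ltW p_ge))) //.
by move: n_ge; rewrite ler_pdivrMr // => n_ge; lra.
Unshelve. all: by end_near. Qed.

Lemma root_regime_growth : root_regime p ->
  forall M : R, \forall n \near \oo, M <= n%:R * p n.
Proof.
move=> [K [beta [K_gt0 [beta_gt0 [beta_lt1 pE]]]]] M; near=> n.
have -> : p n = K * n%:R `^ (- beta) by near: n.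
have n_ge : (`|M| / K) `^ (1 - beta)^-1 <= n%:R by near: n; exact: nbhs_infty_ger.
have npowE : n%:R * n%:R `^ (- beta) = n%:R `^ (1 - beta).
  by rewrite -(@mulr_powRB1 _ _ (1 - beta)) ?ler0n ?subr_gt0 // addrAC subrr add0r.
have powM : `|M| / K <= n%:R `^ (1 - beta).
  have -> : `|M| / K = ((`|M| / K) `^ (1 - beta)^-1) `^ (1 - beta).
    by rewrite -powRrM mulVf ?powRr1 ?divr_ge0 ?(ltW K_gt0) // subr_eq0 gt_eqF.
  by rewrite ge0_ler_powR ?nnegrE ?powR_ge0 ?ler0n ?subr_ge0 // ltW.
by rewrite mulrCA npowE (le_trans (ler_norm M)) // -ler_pdivrMl // mulrC.
Unshelve. all: by end_near. Qed.

Lemma log_regime_growth : log_regime p ->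
  forall M : R, \forall n \near \oo, M <= n%:R * p n.
Proof.
move=> [K [K_gt0 pE]] M; near=> n.
have -> : p n = K * ln n%:R / n%:R by near: n.
have n_ge : expR (`|M| / K) <= n%:R by near: n; exact: nbhs_infty_ger.
have n_gt0 : (0 : R) < n%:R by apply: lt_le_trans n_ge; exact: expR_gt0.
rewrite mulrC divfK ?gt_eqF // (le_trans (ler_norm M)) // -ler_pdivrMl //.
by rewrite -[X in X <= _]expRK ler_ln ?posrE ?expR_gt0 // mulrC.
Unshelve. all: by end_near. Qed.

Lemma regime_growth : density_regime p \/ root_regime p \/ log_regime p ->
  forall M : R, \forall n \near \oo, M <= n%:R * p n.
Proof.
case=> [|[]]; [exact: density_regime_growth | exact: root_regime_growth |
  exact: log_regime_growth].
Qed.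

Lemma expr1Bhalf_vanishing : (forall n, 0 <= p n <= 1) ->
  (forall M : R, \forall n \near \oo, M <= n%:R * p n) ->
  forall e : R, 0 < e -> \forall n \near \oo, (1 - p n / 2) ^+ n.-1 <= e.
Proof.
move=> p01 growth e e_gt0; near=> n.
have n_gt0 : (0 < n)%N by near: n; exact: nbhs_infty_gt.
have np_ge : 2 / e + 1 <= n%:R * p n by near: n; exact: growth.
have /andP [p_ge0 p_le1] := p01 n.
have p_half : 0 <= p n / 2 <= 1 by apply/andP; split; lra.
have := expr1B_mul1D_le1 n.-1 p_half.
have nE : n%:R = (n.-1)%:R + 1 :> R by rewrite natr1 prednK.
rewrite nE in np_ge; set m := (n.-1)%:R in np_ge *; set X := _ ^+ n.-1.
have X_ge0 : 0 <= X by rewrite exprn_ge0 // subr_ge0; lra.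
have m_ge0 : 0 <= m by rewrite ler0n.
have mp_ge : 2 / e <= m * p n by nra.
move=> bound; rewrite -[e]mul1r -ler_pdivrMr // (le_trans _ bound) // ler_wpM2l //; lra.
Unshelve. all: by end_near. Qed.

End Growth.

Lemma exists_natr_sqr_gt (R : realType) (x eps : R) : 0 < eps ->
  exists2 D : nat, (0 < D)%N & x < eps ^+ 2 * D%:R ^+ 2.
Proof.
move=> eps_gt0; pose D := (Num.Def.archi_bound (`|x| / eps ^+ 2)).+1.
have lt_D : `|x| / eps ^+ 2 < D%:R.
  by rewrite (lt_le_trans (archi_boundP _)) ?divr_ge0 ?ler_nat ?exprn_ge0 // ltW.
exists D => //; rewrite (le_lt_trans (ler_norm x)) // -ltr_pdivrMl ?exprn_gt0 //.
by rewrite mulrC (lt_le_trans lt_D) // expr2 ler_peMr ?ler1n.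
Qed.

Unset Implicit Arguments.

Theorem mainTheorem5 (R : realType) (p : nat -> R)
    (hp01 : forall n, 0 <= p n <= 1)
    (hreg : density_regime p \/ root_regime p \/ log_regime p) :
  forall (k : nat) (eps delta theta : R), 0 < eps -> 0 < delta -> 0 < theta ->
  exists N : nat, forall n : nat, (N <= n)%N ->
    er_prob (p n) (fun E : graph n => 1 - delta <= small_rw_proportion k eps E)
      >= 1 - theta.
Proof.
move=> k eps delta theta eps_gt0 delta_gt0 theta_gt0.
have [D D_gt0 k_lt] := exists_natr_sqr_gt k%:R eps_gt0.
pose C : R := D%:R * 2 ^+ D / delta.
have C_gt0 : 0 < C by rewrite !mulr_gt0 ?exprn_gt0 ?invr_gt0 ?ltr0n.
have [N _ vanishing] :=
  expr1Bhalf_vanishing hp01 (regime_growth hreg) (divr_gt0 theta_gt0 C_gt0).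
exists N.+1 => n lt_Nn.
have n_gt0 : (0 < n)%N by apply: leq_trans lt_Nn.
apply: le_trans (er_prob_small_rw_ge (hp01 n) n_gt0 D_gt0 eps_gt0 delta_gt0 k_lt).
have small_mean := vanishing n (ltnW lt_Nn).
by rewrite lerD2l lerN2 -/C mulrC -ler_pdivlMr.
Qed.
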